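(* Let $\mathscr{G}_n$ be a simple, verbose $\upsilon$-reduction grammar. Then for each production $G_n \to \chi[\sigma_1]\cdots[\sigma_w]$ of $\mathscr{G}_n$ whose right-hand side has closure width $w$, every ground term $\delta \in L(\chi[\sigma_1]\cdots[\sigma_w])$ has closure width $w$.
   Context: $\lambda\upsilon$-terms: $t ::= \underline{n} \mid \lambda t \mid t\,t \mid t[s]$; substitutions $s ::= t/ \mid \Uparrow(s) \mid\ \uparrow$; indices $\underline{n} ::= \underline{0} \mid \mathtt{S}\,\underline{n}$. The $\upsilon$-rules: $(a b)[s] \to a[s](b[s])$; $(\lambda a)[s] \to \lambda(a[\Uparrow(s)])$; $\underline{0}[a/] \to a$; $(\mathtt{S}\,\underline{n})[a/] \to \underline{n}$; $\underline{0}[\Uparrow(s)] \to \underline{0}$; $(\mathtt{S}\,\underline{n})[\Uparrow(s)] \to \underline{n}[s][\uparrow]$; $\underline{n}[\uparrow] \to \mathtt{S}\,\underline{n}$. A term normalises in $k$ steps if leftmost-outermost $\upsilon$-reduction reaches a $\upsilon$-normal form in exactly $k$ steps. $\mathscr{F}$ is the ranked alphabet of $\lambda\upsilon$ symbols (application, closure $\cdot[\cdot]$ binary; $\lambda$, $\cdot/$, $\Uparrow$, $\mathtt{S}$ unary; $\uparrow,\underline{0}$ constants); $\mathscr{T}_{\mathscr{F}}(X)$ is the set of terms over $\mathscr{F}$ with variables from $X$. In a regular tree grammar with productions $X\to\alpha$, $L(\alpha)$ is the set of ground terms derivable from $\alpha$; a non-terminal is unambiguous if each ground term has at most one derivation from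 it; a production $X\to\alpha$ is self-referencing if $X$ occurs in $\alpha$, regular otherwise. $\Lambda$ has productions $T \to N \mid \lambda T \mid T T \mid T[S]$, $S \to T/ \mid \Uparrow(S) \mid \uparrow$, $N \to \underline{0} \mid \mathtt{S} N$. A $\upsilon$-reduction grammar $\mathscr{G}_n$ has axiom $G_n$, non-terminals $\{T,S,N,G_0,\dots,G_n\}$, contains all productions of $\Lambda$, and each $G_k$ ($0\le k\le n$) is unambiguous with $L(G_k)$ the set of terms normalising in exactly $k$ steps. It is simple if its self-referencing productions are productions of $\Lambda$ or of the form $G_k \to \lambda G_k \mid G_0 G_k \mid G_k G_0$, and each regular production $G_k\to\alpha$ has $\alpha \in \mathscr{T}_{\mathscr{F}}(\{T,S,N,G_0,\dots,G_{k-1}\})$. It is verbose if none of its productions has the form $X \to G_k[\sigma_1]\cdots[\sigma_w]$ for some $k$ and $w\ge 0$. A term $\alpha$ has closure width $w$ if $w$ is the largest non-negative integer such that $\alpha = \chi[\sigma_1]\cdots[\sigma_w]$ for some term $\chi$ (the head) and terms $\sigma_1,\dots,\sigma_w$. *)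

From Stdlib Require Import List Arith.
Import ListNotations.

Inductive tm : Type :=
| App   : tm -> tm -> tm
| Clo   : tm -> tm -> tm      (* a[s] *)
| Lam   : tm -> tm
| Slash : tm -> tm            (* a/ *)
| Lift  : tm -> tm            (* Uparrow(s) *)
| Succ  : tm -> tm
| Shift : tm                  (* uparrow *)
| Zero  : tm.

(** Sorts of Lambda: lambda-upsilon terms (T), substitutions (S), indices (N). *)
Fixpoint is_index (t : tm) : Prop :=
  match t with
  | Zero => True
  | Succ n => is_index n
  | _ => False
  end.

Fixpoint is_term (t : tm) : Prop :=
  match t with
  | Zero => True
  | Succ n => is_index n
  | Lam a => is_term a
  | App a b => is_term a /\ is_term b
  | Clo a s => is_term a /\ is_subst s
  | _ => False
  end
with is_subst (s : tm) : Prop :=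
  match s with
  | Slash a => is_term a
  | Lift s' => is_subst s'
  | Shift => True
  | _ => False
  end.

Inductive rootstep : tm -> tm -> Prop :=
| r_app   : forall a b s, rootstep (Clo (App a b) s) (App (Clo a s) (Clo b s))
| r_lam   : forall a s, rootstep (Clo (Lam a) s) (Lam (Clo a (Lift s)))
| r_zslash: forall a, rootstep (Clo Zero (Slash a)) a
| r_sslash: forall n a, rootstep (Clo (Succ n) (Slash a)) n
| r_zlift : forall s, rootstep (Clo Zero (Lift s)) Zero
| r_slift : forall n s, rootstep (Clo (Succ n) (Lift s)) (Clo (Clo n s) Shift)
| r_shift : forall n, is_index n -> rootstep (Clo n Shift) (Succ n).

Definition is_redex (t : tm) : Prop := exists t', rootstep t t'.

Inductive ustep : tm -> tm -> Prop :=
| u_root : forall t t', rootstep t t' -> ustep t t'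
| u_appl : forall a a' b, ustep a a' -> ustep (App a b) (App a' b)
| u_appr : forall a b b', ustep b b' -> ustep (App a b) (App a b')
| u_clol : forall a a' s, ustep a a' -> ustep (Clo a s) (Clo a' s)
| u_clor : forall a s s', ustep s s' -> ustep (Clo a s) (Clo a s')
| u_lam  : forall a a', ustep a a' -> ustep (Lam a) (Lam a')
| u_slash: forall a a', ustep a a' -> ustep (Slash a) (Slash a')
| u_lift : forall a a', ustep a a' -> ustep (Lift a) (Lift a')
| u_succ : forall a a', ustep a a' -> ustep (Succ a) (Succ a').

Definition unf (t : tm) : Prop := ~ exists t', ustep t t'.

Inductive lostep : tm -> tm -> Prop :=
| lo_root : forall t t', rootstep t t' -> lostep t t'
| lo_appl : forall a a' b, lostep a a' -> lostep (App a b) (App a' b)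
| lo_appr : forall a b b', unf a -> lostep b b' -> lostep (App a b) (App a b')
| lo_clol : forall a a' s, ~ is_redex (Clo a s) -> lostep a a' ->
            lostep (Clo a s) (Clo a' s)
| lo_clor : forall a s s', ~ is_redex (Clo a s) -> unf a -> lostep s s' ->
            lostep (Clo a s) (Clo a s')
| lo_lam  : forall a a', lostep a a' -> lostep (Lam a) (Lam a')
| lo_slash: forall a a', lostep a a' -> lostep (Slash a) (Slash a')
| lo_lift : forall a a', lostep a a' -> lostep (Lift a) (Lift a')
| lo_succ : forall a a', lostep a a' -> lostep (Succ a) (Succ a').

Inductive lo_steps : nat -> tm -> tm -> Prop :=
| lo0 : forall t, lo_steps 0 t t
| loS : forall k t u v, lostep t u -> lo_steps k u v -> lo_steps (S k) t v.

Definition normalises_in (k : nat) (t : tm) : Prop :=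
  exists u, lo_steps k t u /\ unf u.

Inductive nt : Type := NT | NS | NN | NG (k : nat).

Inductive pat : Type :=
| PVar   : nt -> pat
| PApp   : pat -> pat -> pat
| PClo   : pat -> pat -> pat
| PLam   : pat -> pat
| PSlash : pat -> pat
| PLift  : pat -> pat
| PSucc  : pat -> pat
| PShift : pat
| PZero  : pat.

Definition production := (nt * pat)%type.
Definition grammar := list production.

(** Derivation trees: a node records the production used and the derivations
    of the non-terminal occurrences of its right-hand side, left to right. *)
Inductive dtree : Type := DNode : production -> list dtree -> dtree.

Inductive valid (g : grammar) : nt -> tm -> dtree -> Prop :=
| v_node : forall X a t ds, In (X, a) g -> pvalid g a t ds ->
           valid g X t (DNode (X, a) ds)
with pvalid (g : grammar) : pat -> tm -> list dtree -> Prop :=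
| pv_var : forall X t d, valid g X t d -> pvalid g (PVar X) t [d]
| pv_app : forall a b ta tb d1 d2, pvalid g a ta d1 -> pvalid g b tb d2 ->
           pvalid g (PApp a b) (App ta tb) (d1 ++ d2)
| pv_clo : forall a b ta tb d1 d2, pvalid g a ta d1 -> pvalid g b tb d2 ->
           pvalid g (PClo a b) (Clo ta tb) (d1 ++ d2)
| pv_lam : forall a t d, pvalid g a t d -> pvalid g (PLam a) (Lam t) d
| pv_slash : forall a t d, pvalid g a t d -> pvalid g (PSlash a) (Slash t) d
| pv_lift : forall a t d, pvalid g a t d -> pvalid g (PLift a) (Lift t) d
| pv_succ : forall a t d, pvalid g a t d -> pvalid g (PSucc a) (Succ t) d
| pv_shift : pvalid g PShift Shift []
| pv_zero : pvalid g PZero Zero [].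

Definition langN (g : grammar) (X : nt) (t : tm) : Prop := exists d, valid g X t d.
Definition langP (g : grammar) (a : pat) (t : tm) : Prop := exists ds, pvalid g a t ds.

Definition unambiguous (g : grammar) (X : nt) : Prop :=
  forall t d1 d2, valid g X t d1 -> valid g X t d2 -> d1 = d2.

Fixpoint vars_in (P : nt -> Prop) (a : pat) : Prop :=
  match a with
  | PVar X => P X
  | PApp a b | PClo a b => vars_in P a /\ vars_in P b
  | PLam a | PSlash a | PLift a | PSucc a => vars_in P a
  | PShift | PZero => True
  end.

Fixpoint occurs (X : nt) (a : pat) : Prop :=
  match a with
  | PVar Y => X = Y
  | PApp a b | PClo a b => occurs X a \/ occurs X b
  | PLam a | PSlash a | PLift a | PSucc a => occurs X a
  | PShift | PZero => False
  end.

Definition nt_upto (k : nat) (X : nt) : Prop :=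
  match X with NG j => j <= k | _ => True end.
Definition nt_below (k : nat) (X : nt) : Prop :=
  match X with NG j => j < k | _ => True end.

Definition Lambda : grammar :=
  [ (NT, PVar NN); (NT, PLam (PVar NT)); (NT, PApp (PVar NT) (PVar NT));
    (NT, PClo (PVar NT) (PVar NS));
    (NS, PSlash (PVar NT)); (NS, PLift (PVar NS)); (NS, PShift);
    (NN, PZero); (NN, PSucc (PVar NN)) ].

Definition reduction_grammar (n : nat) (g : grammar) : Prop :=
  (forall X a, In (X, a) g -> nt_upto n X /\ vars_in (nt_upto n) a) /\
  (forall p, In p Lambda -> In p g) /\
  (forall k, k <= n ->
     unambiguous g (NG k) /\
     (forall t, langN g (NG k) t <-> is_term t /\ normalises_in k t)).

Definition simple (n : nat) (g : grammar) : Prop :=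
  (forall X a, In (X, a) g -> occurs X a ->
     In (X, a) Lambda \/
     exists k, (X, a) = (NG k, PLam (PVar (NG k))) \/
               (X, a) = (NG k, PApp (PVar (NG 0)) (PVar (NG k))) \/
               (X, a) = (NG k, PApp (PVar (NG k)) (PVar (NG 0)))) /\
  (forall k a, In (NG k, a) g -> ~ occurs (NG k) a -> vars_in (nt_below k) a).

Fixpoint phead (a : pat) : pat :=
  match a with PClo b _ => phead b | _ => a end.

Definition verbose (g : grammar) : Prop :=
  forall X a k, In (X, a) g -> phead a <> PVar (NG k).

Fixpoint pwidth (a : pat) : nat :=
  match a with PClo b _ => S (pwidth b) | _ => 0 end.
Fixpoint width (t : tm) : nat :=
  match t with Clo b _ => S (width b) | _ => 0 end.

(* Write delta = tau[s_1]...[s_w] with tau in L(chi).  By verbosity chi is not some G_k, and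
   no head is a closure, so tau has width 0 unless chi is T, S or N.  chi = S is impossible,
   as Shift[s_1]...[s_w] is not a term.  For chi = N, the term (S tau)[s_1]...[s_w] is also in
   L(G_n), so S tau is a term and tau an index.  For chi = T, both 0[Shift][s_1]...[s_w] and
   (S 0)[s_1]...[s_w] lie in L(G_n); but leftmost-outermost reduction rewrites the first into
   the second in one step, so they cannot both normalise in exactly n steps. *)
From Stdlib Require Import List Lia.
Import ListNotations.

Fixpoint closes (t : tm) (L : list tm) : tm :=
  match L with [] => t | s :: L' => Clo (closes t L') s end.

Lemma width_closes t L : width (closes t L) = length L + width t.
Proof. induction L; simpl; auto. Qed.

Lemma is_term_closes t L : is_term (closes t L) -> is_term t.
Proof. induction L; simpl; tauto. Qed.

Lemma phead_not_clo a b c : phead a <> PClo b c.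
Proof. induction a; simpl; congruence. Qed.

Lemma langN_rule g X a t : In (X, a) g -> langP g a t -> langN g X t.
Proof. intros Hin [ds H]. eexists. econstructor; eauto. Qed.

Lemma langP_var g X t : langP g (PVar X) t <-> langN g X t.
Proof.
  split.
  - intros [ds H]. inversion H; subst. eexists; eauto.
  - intros [d H]. eexists. constructor; eauto.
Qed.

Lemma langP_clo g a b ta tb :
  langP g a ta -> langP g b tb -> langP g (PClo a b) (Clo ta tb).
Proof. intros [d1 H1] [d2 H2]. eexists. constructor; eauto. Qed.

Lemma langP_succ g a t : langP g a t -> langP g (PSucc a) (Succ t).
Proof. intros [d H]. eexists. constructor; eauto. Qed.

Lemma langP_phead_split g a : forall delta, langP g a delta ->
  exists tc L, delta = closes tc L /\ length L = pwidth a /\ langP g (phead a) tc /\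
    forall t, langP g (phead a) t -> langP g a (closes t L).
Proof.
  induction a; intros delta Hd; try (exists delta, []; simpl; auto; fail).
  destruct Hd as [ds Hd]. inversion Hd; subst.
  destruct (IHa1 ta) as (tc & L & -> & HL & Htc & Hsub); [eexists; eauto |].
  exists tc, (tb :: L). simpl. repeat split; auto.
  intros t Ht. apply langP_clo; [auto | eexists; eauto].
Qed.

Section LambdaLanguages.

Variable g : grammar.
Hypothesis Lambda_incl : incl Lambda g.

Lemma langN_Lambda X a t : In (X, a) Lambda -> langP g a t -> langN g X t.
Proof. intros Hin. apply langN_rule, Lambda_incl, Hin. Qed.

Lemma langN_S_shift : langN g NS Shift.
Proof. apply langN_Lambda with PShift; [simpl; tauto | exists []; constructor]. Qed.

Lemma langN_N_zero : langN g NN Zero.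
Proof. apply langN_Lambda with PZero; [simpl; tauto | exists []; constructor]. Qed.

Lemma langN_N_succ t : langN g NN t -> langN g NN (Succ t).
Proof.
  intros Ht. apply langN_Lambda with (PSucc (PVar NN)); [simpl; tauto |].
  apply langP_succ, langP_var, Ht.
Qed.

Lemma langN_T_index t : langN g NN t -> langN g NT t.
Proof. intros Ht. apply langN_Lambda with (PVar NN); [simpl; tauto | apply langP_var, Ht]. Qed.

Lemma langN_T_zero_shift : langN g NT (Clo Zero Shift).
Proof.
  apply langN_Lambda with (PClo (PVar NT) (PVar NS)); [simpl; tauto |].
  apply langP_clo; apply langP_var; auto using langN_T_index, langN_N_zero, langN_S_shift.
Qed.

End LambdaLanguages.

Lemma rootstep_functional t u1 u2 : rootstep t u1 -> rootstep t u2 -> u1 = u2.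
Proof. intros H1 H2; inversion H1; subst; inversion H2; subst; simpl in *; tauto. Qed.

Lemma lostep_ustep t u : lostep t u -> ustep t u.
Proof. induction 1; solve [constructor; auto]. Qed.

Lemma unf_lostep t u : unf t -> ~ lostep t u.
Proof. intros Ht Hl. apply Ht. exists u. apply lostep_ustep, Hl. Qed.

Lemma lostep_functional t u1 : lostep t u1 -> forall u2, lostep t u2 -> u1 = u2.
Proof.
  induction 1; intros u2 H2; inversion H2; subst;
    try (eapply rootstep_functional; eauto; fail);
    try (match goal with H : rootstep _ _ |- _ => inversion H; fail end);
    try (exfalso; match goal with H : ~ is_redex _ |- _ => apply H; eexists; eauto end; fail);
    try (exfalso; eapply unf_lostep; eauto; fail);
    f_equal; auto.
Qed.

Lemma normalises_in_functional k k' t :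
  normalises_in k t -> normalises_in k' t -> k = k'.
Proof.
  intros (u & Hsteps & Hu). revert k'.
  induction Hsteps as [t | k t v u Hstep Hsteps IH]; intros k' (u' & Hsteps' & Hu');
    inversion Hsteps'; subst; auto.
  1, 2: exfalso;
    match goal with Hn : unf ?x, Hs : lostep ?x _ |- _ => exact (unf_lostep _ _ Hn Hs) end.
  f_equal. apply IH; auto.
  match goal with H : lostep t ?w |- _ => rewrite (lostep_functional _ _ Hstep _ H) end.
  eexists; eauto.
Qed.

Lemma lostep_normalises_in_distinct k t u :
  lostep t u -> normalises_in k t -> ~ normalises_in k u.
Proof.
  intros Hstep Ht (v & Hsteps & Hv).
  assert (S k = k); [| lia].
  apply normalises_in_functional with t; [exists v; split; [econstructor; eauto | auto] | auto].
Qed.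

Lemma lostep_closes_shift_zero L :
  lostep (closes (Clo Zero Shift) L) (closes (Succ Zero) L).
Proof.
  induction L as [| s L IH]; simpl.
  - apply lo_root. constructor. exact I.
  - apply lo_clol; [| exact IH].
    intros [t' Hr]. destruct L; inversion Hr; subst; simpl in *; tauto.
Qed.

Lemma head_width_zero g n L chi :
  incl Lambda g -> (forall k, chi <> PVar (NG k)) -> (forall b c, chi <> PClo b c) ->
  (forall t, langP g chi t -> is_term (closes t L) /\ normalises_in n (closes t L)) ->
  forall tc, langP g chi tc -> width tc = 0.
Proof.
  intros Hincl Hnot_G Hnot_clo Hcloses tc Htc.
  destruct chi as [X | ? ? | b c | ? | ? | ? | ? | |];
    try (destruct Htc as [ds Htc]; inversion Htc; reflexivity).
  - destruct X as [| | | k].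
    + exfalso.
      apply (lostep_normalises_in_distinct n _ _ (lostep_closes_shift_zero L));
        apply Hcloses, langP_var.
      * apply langN_T_zero_shift, Hincl.
      * apply langN_T_index, langN_N_succ, langN_N_zero; exact Hincl.
    + exfalso. apply (is_term_closes Shift L), Hcloses, langP_var, langN_S_shift, Hincl.
    + assert (Hsucc : is_term (Succ tc)).
      { apply (is_term_closes _ L), Hcloses, langP_var, langN_N_succ, langP_var, Htc.
        exact Hincl. }
      destruct tc; simpl in Hsucc; tauto.
    + exfalso. apply (Hnot_G k). reflexivity.
  - exfalso. apply (Hnot_clo b c). reflexivity.
Qed.

Theorem mainTheorem6 (n : nat) (g : grammar) :
  reduction_grammar n g -> simple n g -> verbose g ->
  forall a : pat, In (NG n, a) g ->
  forall delta : tm, langP g a delta -> width delta = pwidth a.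
Proof.
  intros (_ & Lambda_incl & Hlang) _ Hverbose a Ha delta Hdelta.
  destruct (Hlang n (le_n n)) as [_ HGn].
  destruct (langP_phead_split g a delta Hdelta) as (tc & L & -> & HL & Htc & Hsubst).
  rewrite width_closes, HL.
  enough (width tc = 0) by lia.
  apply (head_width_zero g n L (phead a)); auto.
  - intros k. apply (Hverbose _ _ k Ha).
  - apply phead_not_clo.
  - intros t Ht. apply HGn. apply langN_rule with a; auto.
Qed.
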